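(* Let $\mathbb{K}=(G,M,I)$ be a formal context and let $\operatorname{Ext}(\mathbb{K})$ be its set of extents. Consider the lattice ${\downarrow}\operatorname{Ext}(\mathbb{K})$ of all closure systems $\mathcal{R}$ on $G$ with $\mathcal{R}\subseteq \operatorname{Ext}(\mathbb{K})$, ordered by set inclusion. For $\mathcal{R}\in{\downarrow}\operatorname{Ext}(\mathbb{K})$ the following are equivalent: (1) $\mathcal{R}$ is join-irreducible in ${\downarrow}\operatorname{Ext}(\mathbb{K})$; (2) there exists $A\in\operatorname{Ext}(\mathbb{K})\setminus\{G\}$ with $\mathcal{R}=\{G,A\}$.
   Context: A formal context is a triple $(G,M,I)$ with finite nonempty sets $G$ (objects), $M$ (attributes) and $I\subseteq G\times M$. Derivations: for $A\subseteq G$, $A'=\{m\in M\mid \forall a\in A:(a,m)\in I\}$; for $B\subseteq M$, $B'=\{g\in G\mid \forall b\in B:(g,b)\in I\}$. An extent is a set $A\subseteq G$ with $A''=A$; $\operatorname{Ext}(\mathbb{K})$ is the set of all extents (it contains $G$ and is closed under intersections). A closure system on $G$ is a family of subsets of $G$ containing $G$ and closed under arbitrary intersections. In ${\downarrow}\operatorname{Ext}(\mathbb{K})$ the meet is intersection and the join of a family is the smallest closure system on $G$ containing its union; the least element is $\{G\}$. An element $x$ of a lattice is join-irreducible if $x\neq\bot$ and $x=\bigvee Y$ implies $x\in Y$. *)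

From mathcomp Require Import all_boot.
Set Implicit Arguments. Unset Strict Implicit. Unset Printing Implicit Defensive.

Section FCA.
Variables (G M : finType) (I : G -> M -> bool).

Definition intent (A : {set G}) : {set M} := [set m | [forall g in A, I g m]].
Definition extent_of (B : {set M}) : {set G} := [set g | [forall m in B, I g m]].

Definition is_extent (A : {set G}) : bool := extent_of (intent A) == A.

Definition Ext : {set {set G}} := [set A | is_extent A].

(* Closure system on G: contains G and closed under arbitrary intersections
   (the intersection of the empty subfamily is G). *)
Definition closure_system (R : {set {set G}}) : bool :=
  (setT \in R) && [forall F : {set {set G}}, (F \subset R) ==> ((\bigcap_(A in F) A) \in R)].

Definition downExt (R : {set {set G}}) : bool := closure_system R && (R \subset Ext).

(* Join in ↓Ext(K) of a family Y: smallest closure system on G containing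
   the union of Y, i.e. the intersection of all closure systems containing it. *)
Definition cs_join (Y : {set {set {set G}}}) : {set {set G}} :=
  \bigcap_(S : {set {set G}} | closure_system S && ((\bigcup_(R in Y) R) \subset S)) S.

Definition cs_bot : {set {set G}} := [set setT].

Definition join_irreducible (R : {set {set G}}) : Prop :=
  R <> cs_bot /\
  forall Y : {set {set {set G}}}, (forall S, S \in Y -> downExt S) ->
    R = cs_join Y -> R \in Y.
End FCA.

From mathcomp Require Import all_boot.
Set Implicit Arguments. Unset Strict Implicit. Unset Printing Implicit Defensive.

(* Every R in ↓Ext(K) is the join of its two-element subsystems {G, A}, A ∈ R,
   and each of these lies in ↓Ext(K); so a join-irreducible R must be one of
   them.  Conversely, if {G, A} = ⋁Y with A ≠ G, some member of Y contains A
   (otherwise ⋁Y ⊆ {G}), and that member, lying between {G} and {G, A}, is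
   {G, A} itself. *)

Section ClosureSystems.
Variable G : finType.
Implicit Types (A : {set G}) (R S : {set {set G}}) (Y : {set {set {set G}}}).

Lemma closure_system_setT R : closure_system R -> setT \in R.
Proof. by case/andP. Qed.

Lemma closure_system_pair A : closure_system [set setT; A].
Proof.
rewrite /closure_system !inE eqxx /=; apply/forallP => F; apply/implyP => sF.
have memF B : B \in F -> B = setT \/ B = A.
  by move/(subsetP sF); rewrite !inE => /orP [] /eqP ->; [left | right].
have [AF | AnF] := boolP (A \in F).
  suff -> : \bigcap_(B in F) B = A by rewrite !inE eqxx orbT.
  apply/eqP; rewrite eqEsubset bigcap_inf //=.
  by apply/bigcapsP => B /memF [] ->; rewrite ?subsetT.
suff -> : \bigcap_(B in F) B = setT by rewrite !inE eqxx.
apply/eqP; rewrite eqEsubset subsetT /=; apply/bigcapsP => B BF.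
by case: (memF B BF) => [-> // | BA]; rewrite -BA BF in AnF.
Qed.

Lemma closure_system_bot : closure_system (cs_bot G).
Proof. by rewrite /cs_bot -[[set setT]]setUid closure_system_pair. Qed.

Lemma cs_join_least Y S :
  closure_system S -> \bigcup_(R in Y) R \subset S -> cs_join Y \subset S.
Proof. by move=> csS sYS; apply: bigcap_inf; rewrite csS sYS. Qed.

Lemma sub_cs_join Y S : S \in Y -> S \subset cs_join Y.
Proof.
move=> SY; apply: subset_trans (bigcup_sup _ SY) _.
by apply/bigcapsP => T /andP [].
Qed.

Lemma cs_join_pairs R :
  closure_system R -> cs_join [set [set setT; A] | A in R] = R.
Proof.
move=> csR; apply/eqP; rewrite eqEsubset; apply/andP; split.
  apply: cs_join_least => //; apply/bigcupsP => _ /imsetP [A AR ->].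
  by apply/subsetP => B; rewrite !inE => /orP [] /eqP -> //; exact: closure_system_setT.
apply/subsetP => A AR; apply: (subsetP (sub_cs_join (imset_f _ AR))).
by rewrite !inE eqxx orbT.
Qed.

End ClosureSystems.

Section Extents.
Variables (G M : finType) (I : G -> M -> bool).
Implicit Types (A : {set G}) (R : {set {set G}}).

Lemma sub_extent_of_intent A : A \subset extent_of I (intent I A).
Proof.
apply/subsetP => g gA; rewrite inE; apply/forall_inP => m.
by rewrite inE => /forall_inP; apply.
Qed.

Lemma setT_in_Ext : setT \in Ext I.
Proof. by rewrite inE /is_extent eqEsubset subsetT sub_extent_of_intent. Qed.

Lemma downExt_pair A : A \in Ext I -> downExt I [set setT; A].
Proof.
move=> AE; rewrite /downExt closure_system_pair /=.
by apply/subsetP => B; rewrite !inE => /orP [] /eqP ->; rewrite -?inE ?setT_in_Ext.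
Qed.

Lemma join_irreducible_pair A :
  A \in Ext I -> A != setT -> join_irreducible I [set setT; A].
Proof.
move=> AE AnT; have Apair : A \in [set setT; A] by rewrite !inE eqxx orbT.
split=> [pair_bot | Y downY pairE].
  by move: Apair; rewrite pair_bot inE (negbTE AnT).
have S_sub S : S \in Y -> S \subset [set setT; A] by rewrite pairE; exact: sub_cs_join.
have [/exists_inP [S SY AS] | /exists_inPn AnY] := boolP [exists S in Y, A \in S].
  suff <- : S = [set setT; A] by [].
  apply/eqP; rewrite eqEsubset S_sub //=; apply/subsetP => B.
  have TS : setT \in S by apply: closure_system_setT; case/andP: (downY S SY).
  by rewrite !inE => /orP [] /eqP ->.
have joinY_bot : cs_join Y \subset cs_bot G.
  apply: (cs_join_least (closure_system_bot G)); apply/bigcupsP => S SY.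
  apply/subsetP => B BS; have := subsetP (S_sub S SY) B BS.
  by rewrite !inE => /orP [] // /eqP BA; move: (AnY S SY); rewrite -BA BS.
have := subsetP joinY_bot A; rewrite -pairE => /(_ Apair).
by rewrite /cs_bot inE (negbTE AnT).
Qed.

Lemma join_irreducible_is_pair R :
  downExt I R -> join_irreducible I R ->
  exists2 A, A \in R & R = [set setT; A] /\ A != setT.
Proof.
case/andP=> csR sRE [Rnbot Rirr].
have /imsetP [A AR RE] : R \in [set [set setT; A] | A in R].
  apply: Rirr; last by rewrite cs_join_pairs.
  by move=> _ /imsetP [A AR ->]; apply/downExt_pair/(subsetP sRE).
exists A => //; split=> //; apply: contra_notN Rnbot => /eqP AT.
by rewrite RE AT setUid.
Qed.

End Extents.

Theorem proposition3 (G M : finType) (I : G -> M -> bool)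
  (g0 : G) (m0 : M) (R : {set {set G}}) :
  downExt I R ->
  (join_irreducible I R <->
   exists A : {set G}, A \in Ext I /\ A != setT /\ R = [set setT; A]).
Proof.
move=> downR; split.
  move=> /(join_irreducible_is_pair downR) [A AR [RE AnT]].
  by exists A; split=> //; case/andP: downR => _ /subsetP; apply.
by case=> A [AE [AnT ->]]; exact: join_irreducible_pair.
Qed.
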